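(* Let $X=(X_i)_{i\ge1}$ and $Y=(Y_j)_{j\ge1}$ be real-valued partially exchangeable sequences, so that there exist random probability measures $(\tilde p_1,\tilde p_2)$ on $\mathbb{R}$ such that, conditionally on $(\tilde p_1,\tilde p_2)$, all $X_i$ and $Y_j$ are independent with $X_i\sim\tilde p_1$ and $Y_j\sim\tilde p_2$. Assume that $\tilde p_1$ and $\tilde p_2$ have the same marginal distribution and that $X_1$ has finite, strictly positive variance. Then for all $i\neq i'$ and all $j$, $$-\operatorname{corr}(X_i,X_{i'})\le \operatorname{corr}(X_i,Y_j)\le \operatorname{corr}(X_i,X_{i'}).$$
   Context: Partial exchangeability of $X$ and $Y$ means that for all $n,m$ and all permutations $\pi_1$ of $\{1,\dots,n\}$ and $\pi_2$ of $\{1,\dots,m\}$, $((X_i)_{i=1}^n,(Y_j)_{j=1}^m)$ and $((X_{\pi_1(i)})_{i=1}^n,(Y_{\pi_2(j)})_{j=1}^m)$ have the same distribution; by de Finetti's theorem this is equivalent to the conditional i.i.d. representation in the claim. *)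

From HB Require Import structures.
From mathcomp Require Import all_boot all_order all_algebra.
From mathcomp Require Import all_classical all_reals all_analysis giry.
Set Implicit Arguments. Unset Strict Implicit. Unset Printing Implicit Defensive.
Import Order.TTheory GRing.Theory Num.Theory.
Local Open Scope classical_set_scope.
Local Open Scope ring_scope.

(* Pearson correlation coefficient of two real random variables
   (meaningful when both are square integrable with positive variance). *)
Definition corr d (T : measurableType d) (R : realType) (P : probability T R)
  (U V : T -> R) : R :=
  fine (covariance P U V) / (Num.sqrt (fine (variance P U)) * Num.sqrt (fine (variance P V))).

From HB Require Import structures.
From mathcomp Require Import all_boot all_order all_algebra.
From mathcomp Require Import all_classical all_reals all_analysis giry.
From mathcomp Require Import measurable_realfun.
From mathcomp Require Import ring lra.
Import Order.TTheory GRing.Theory Num.Theory.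
Local Open Scope classical_set_scope.
Local Open Scope ring_scope.

(* Since p1 and p2 have the same law, the second moments of the X_i and Y_j
   only depend on the "type" of the pair of indices: Var X_i = Var Y_j = s,
   Cov(X_i, X_i') = Cov(Y_j, Y_j') = c for i <> i', j <> j', and
   Cov(X_i, Y_j) = k.  For W = Y or W = -Y the sequence Z_i = X_i + W_i is then
   exchangeable in the second-moment sense, and
   0 <= Var(Z_0 + ... + Z_n) = (n + 1) (Var Z_0 + n Cov(Z_0, Z_1))
   for every n forces Cov(Z_0, Z_1) = 2 (c +- k) >= 0, i.e. -c <= k <= c. *)

Lemma nat_affine_ge0_slope_ge0 (R : archiRealFieldType) (a b : R) :
  (forall n : nat, 0 <= a + n%:R * b) -> 0 <= b.
Proof.
move=> affine_ge0; rewrite leNgt; apply/negP => b_lt0.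
have := affine_ge0 (Num.truncn (a / - b)).+1; apply/negP; rewrite -ltNge.
have := truncnS_gt (a / - b); rewrite ltr_pdivrMr ?oppr_gt0 //.
lra.
Qed.

Section covariance_algebra.
Context {d : measure_display} {T : measurableType d} {R : realType}.
Variable P : probability T R.

Definition covr (U V : T -> R) : R := fine (covariance P U V).

Lemma Lfun2D {U V : T -> R} : U \in Lfun P 2%:E -> V \in Lfun P 2%:E ->
  U \+ V \in Lfun P 2%:E.
Proof. by apply: (Lfun_addr_closed P _).2; rewrite lee_fin ler1n. Qed.

Lemma Lfun2N {U : T -> R} : U \in Lfun P 2%:E -> \- U \in Lfun P 2%:E.
Proof. exact: Lfun_oppr_closed. Qed.

Lemma Lfun2_sum n (Z : nat -> T -> R) : (forall i, Z i \in Lfun P 2%:E) ->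
  \sum_(i < n) Z i \in Lfun P 2%:E.
Proof.
move=> Z2; apply: (big_ind (fun f => f \in Lfun P 2%:E)) => //.
- exact: (Lfun_cst P 0 2).
- by move=> f g f2 g2; exact: (Lfun2D f2 g2).
Qed.

Lemma Lfun2_Lfun1 (U : T -> R) : U \in Lfun P 2%:E -> U \in Lfun P 1.
Proof. by apply: Lfun_subset12; exact: fin_num_measure. Qed.

Lemma covariance2_fin_num (U V : T -> R) : U \in Lfun P 2%:E -> V \in Lfun P 2%:E ->
  covariance P U V \is a fin_num.
Proof.
move=> U2 V2; apply: covariance_fin_num;
  [exact: Lfun2_Lfun1 | exact: Lfun2_Lfun1 | exact: Lfun2_mul_Lfun1].
Qed.

Lemma covrC (U V : T -> R) : covr U V = covr V U.
Proof. by rewrite /covr covarianceC. Qed.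

Lemma covr_ge0 (U : T -> R) : 0 <= covr U U.
Proof. exact/fine_ge0/variance_ge0. Qed.

Lemma covr0l (U : T -> R) : covr 0 U = 0.
Proof. by rewrite /covr (covariance_cst_l P 0). Qed.

Lemma covrDl (U V W : T -> R) : U \in Lfun P 2%:E -> V \in Lfun P 2%:E ->
  W \in Lfun P 2%:E -> covr (U \+ V) W = covr U W + covr V W.
Proof.
by move=> U2 V2 W2; rewrite /covr covarianceDl ?fineD ?covariance2_fin_num.
Qed.

Lemma covrDr (U V W : T -> R) : U \in Lfun P 2%:E -> V \in Lfun P 2%:E ->
  W \in Lfun P 2%:E -> covr W (U \+ V) = covr W U + covr W V.
Proof. by move=> U2 V2 W2; rewrite covrC covrDl // covrC (covrC V). Qed.

Lemma covrNr (U V : T -> R) : U \in Lfun P 2%:E -> V \in Lfun P 2%:E ->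
  covr U (\- V) = - covr U V.
Proof.
move=> U2 V2; rewrite /covr covarianceNr ?fineN //;
  [exact: Lfun2_Lfun1 | exact: Lfun2_Lfun1 | exact: Lfun2_mul_Lfun1].
Qed.

Lemma covrNl (U V : T -> R) : U \in Lfun P 2%:E -> V \in Lfun P 2%:E ->
  covr (\- U) V = - covr U V.
Proof. by move=> U2 V2; rewrite covrC covrNr // covrC. Qed.

Lemma covr_suml n (Z : nat -> T -> R) (W : T -> R) :
  (forall i, Z i \in Lfun P 2%:E) -> W \in Lfun P 2%:E ->
  covr (\sum_(i < n) Z i) W = \sum_(i < n) covr (Z i) W.
Proof.
move=> Z2 W2; elim: n => [|n IH]; first by rewrite !big_ord0 covr0l.
by rewrite !big_ord_recr /= covrDl ?IH ?Lfun2_sum.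
Qed.

Lemma exchangeable_covr_ge0 {Z : nat -> T -> R} {s c : R} :
  (forall i, Z i \in Lfun P 2%:E) ->
  (forall i, covr (Z i) (Z i) = s) -> (forall i j, i <> j -> covr (Z i) (Z j) = c) ->
  0 <= c.
Proof.
move=> Z2 Zs Zc; apply: (@nat_affine_ge0_slope_ge0 _ s) => n.
have S2 : \sum_(i < n.+1) Z i \in Lfun P 2%:E by exact: Lfun2_sum.
have row_sum (i : 'I_n.+1) : \sum_(j < n.+1) covr (Z j) (Z i) = s + n%:R * c.
  rewrite (bigD1 i) //= Zs; congr (_ + _).
  rewrite (eq_bigr (fun=> c)) => [|j ji]; last first.
    by apply: Zc => /val_inj ji_eq; rewrite ji_eq eqxx in ji.
  by rewrite sumr_const cardC1 card_ord mulr_natl.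
have := covr_ge0 (\sum_(i < n.+1) Z i).
rewrite covr_suml //.
under eq_bigr => i _ do rewrite covrC covr_suml // row_sum.
by rewrite big_const_ord iter_addr_0 pmulrn_lge0.
Qed.

Lemma exchangeable_pair_covr_ge0 {U W : nat -> T -> R} {s s' c c' k : R} :
  (forall i, U i \in Lfun P 2%:E) -> (forall i, W i \in Lfun P 2%:E) ->
  (forall i, covr (U i) (U i) = s) -> (forall i, covr (W i) (W i) = s') ->
  (forall i j, i <> j -> covr (U i) (U j) = c) ->
  (forall i j, i <> j -> covr (W i) (W j) = c') ->
  (forall i j, covr (U i) (W j) = k) ->
  0 <= c + c' + 2 * k.
Proof.
move=> U2 W2 Us Ws Uc Wc UWk.
pose Z i := U i \+ W i.
have Z2 i : Z i \in Lfun P 2%:E by exact: Lfun2D.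
have covrZ i j : covr (Z i) (Z j) = covr (U i) (U j) + covr (W i) (W j) + 2 * k.
  rewrite covrDl ?covrDr // (covrC (W i)) !UWk; ring.
apply: (@exchangeable_covr_ge0 Z (s + s' + 2 * k) _ Z2) => [i|i j ij].
  by rewrite covrZ Us Ws.
by rewrite covrZ Uc ?Wc.
Qed.

Lemma corr_equal_variance {U V : T -> R} {s : R} : 0 < s ->
  covr U U = s -> covr V V = s -> corr P U V = covr U V / s.
Proof.
move=> s_gt0 Us Vs.
change (covr U V / (Num.sqrt (covr U U) * Num.sqrt (covr V V)) = covr U V / s).
by rewrite Us Vs -expr2 sqr_sqrtr // ltW.
Qed.

End covariance_algebra.

Section same_law.
Context {d : measure_display} {T : measurableType d} {R : realType}.
Variable P : probability T R.
Local Open Scope ereal_scope.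

Definition same_law {d'} {T' : measurableType d'} (phi phi' : T -> T') :=
  forall A, measurable A -> P (phi @^-1` A) = P (phi' @^-1` A).

Lemma same_law_sym {d'} {T' : measurableType d'} {phi phi' : T -> T'} :
  same_law phi phi' -> same_law phi' phi.
Proof. by move=> law A mA; rewrite law. Qed.

Lemma same_law_integral {d'} {T' : measurableType d'} {phi phi' : T -> T'}
    (f : T' -> \bar R) :
  measurable_fun setT phi -> measurable_fun setT phi' -> same_law phi phi' ->
  measurable_fun setT f -> \int[P]_x f (phi x) = \int[P]_x f (phi' x).
Proof.
move=> mphi mphi' law mf.
have ge0_integral_law (g : T' -> \bar R) : measurable_fun setT g ->
    (forall y, 0 <= g y) -> \int[P]_x (g \o phi) x = \int[P]_x (g \o phi') x.
  move=> mg g0.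
  have pushE psi : measurable_fun setT psi ->
      \int[P]_x (g \o psi) x = \int[pushforward P psi]_y g y.
    by move=> mpsi; rewrite (ge0_integral_pushforward mpsi) ?preimage_setT.
  rewrite (pushE _ mphi) (pushE _ mphi').
  by apply: eq_measure_integral => A mA _; exact: law.
change (\int[P]_x (f \o phi) x = \int[P]_x (f \o phi') x).
rewrite (integralE _ _ (f \o phi)) (integralE _ _ (f \o phi')).
rewrite (funepos_comp f phi) (funeneg_comp f phi).
rewrite (funepos_comp f phi') (funeneg_comp f phi').
by rewrite (ge0_integral_law _ (measurable_funepos mf) (funepos_ge0 f))
  (ge0_integral_law _ (measurable_funeneg mf) (funeneg_ge0 f)).
Qed.

Lemma same_law_expectation {U U' : T -> R} :
  measurable_fun setT U -> measurable_fun setT U' -> same_law U U' ->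
  'E_P[U] = 'E_P[U'].
Proof.
move=> mU mU' law; rewrite expectation.unlock.
apply: (same_law_integral EFin mU mU' law).
exact/measurable_EFinP.
Qed.

Lemma same_law_Lfun2 {U U' : T -> R} :
  measurable_fun setT U -> measurable_fun setT U' -> same_law U U' ->
  U \in Lfun P 2%:E -> U' \in Lfun P 2%:E.
Proof.
move=> mU mU' law /andP[_]; rewrite !inE /= /finite_norm => U2.
apply/andP; split; rewrite inE //= /finite_norm.
suff -> : 'N[P]_2%:E[EFin \o U'] = 'N[P]_2%:E[EFin \o U] by [].
rewrite Lnorm.unlock /=; congr (_ `^ _).
apply: (same_law_integral (fun z : R => (`|z| `^ 2)%:E) mU' mU (same_law_sym law)).
apply/measurable_EFinP; apply: (measurableT_comp (measurable_powR _)).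
exact: normr_measurable.
Qed.

Definition same_law2 (U V U' V' : T -> R) :=
  forall A B, measurable A -> measurable B ->
  P (U @^-1` A `&` V @^-1` B) = P (U' @^-1` A `&` V' @^-1` B).

Section same_law2.
Context {U V U' V' : T -> R}.
Hypotheses (mU : measurable_fun setT U) (mV : measurable_fun setT V).
Hypotheses (mU' : measurable_fun setT U') (mV' : measurable_fun setT V').
Hypothesis law2 : same_law2 U V U' V'.

Lemma same_law2_fst : same_law U U'.
Proof.
by move=> A mA; have := law2 A setT mA measurableT; rewrite !preimage_setT !setIT.
Qed.

Lemma same_law2_snd : same_law V V'.
Proof.
by move=> B mB; have := law2 setT B measurableT mB; rewrite !preimage_setT !setTI.
Qed.

Lemma same_law2_pair : same_law (fun x => (U x, V x)) (fun x => (U' x, V' x)).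
Proof.
move=> C mC.
have mUV := measurable_fun_pair mU mV; have mUV' := measurable_fun_pair mU' mV'.
apply: (@measure_unique _ R _ _ (fun _ => setT) (measurable_prod_measurableType _ _) _ _ _
  (pushforward P (fun x => (U x, V x))) (pushforward P (fun x => (U' x, V' x)))) => //.
- move=> _ _ [A mA [B mB <-]] [A' mA' [B' mB' <-]]; rewrite -setXI.
  by exists (A `&` A'); [exact: measurableI|exists (B `&` B') => //; exact: measurableI].
- by move=> _; exists setT => //; exists setT => //; rewrite setXTT.
- by rewrite bigcup_const.
- by move=> _ [A mA [B mB <-]]; exact: law2.
- by move=> _; change (P [set: T] < +oo); rewrite probability_setT ltry.
Qed.

Lemma same_law2_covariance :
  covariance P U V = covariance P U' V'.
Proof.
rewrite covariance.unlock.
rewrite (same_law_expectation mU mU' same_law2_fst).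
rewrite (same_law_expectation mV mV' same_law2_snd).
rewrite expectation.unlock; set a := fine _; set b := fine _.
pose f (z : R * R) := ((z.1 - a) * (z.2 - b))%R%:E.
change (\int[P]_w f (U w, V w) = \int[P]_w f (U' w, V' w)).
apply: (same_law_integral f (measurable_fun_pair mU mV) (measurable_fun_pair mU' mV')
  same_law2_pair).
by apply/measurable_EFinP; apply: measurable_funM; apply: measurable_funB.
Qed.

End same_law2.

Lemma same_law2_diag {U U' : T -> R} : same_law U U' -> same_law2 U U U' U'.
Proof.
move=> law A B mA mB; rewrite -(preimage_setI U) -(preimage_setI U').
exact/law/measurableI.
Qed.

End same_law.

Section sets_at2.
Context {d : measure_display} {T : measurableType d} {R : realType}.

(* Fed to the product formula of conditional independence, this family of
   events isolates the coordinates a and b. *)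
Definition sets_at2 (a b : nat) (A B : set T) (i : nat) : set T :=
  if i == a then A else if i == b then B else setT.

Lemma measurable_sets_at2 {a b A B} i :
  measurable A -> measurable B -> measurable (sets_at2 a b A B i).
Proof. by move=> mA mB; rewrite /sets_at2; case: ifP => // _; case: ifP. Qed.

Lemma sets_at2P {n a b A B} (F : nat -> T) : a <> b -> (a < n)%N -> (b < n)%N ->
  (forall i : 'I_n, sets_at2 a b A B i (F i)) <-> A (F a) /\ B (F b).
Proof.
move=> ab a_lt b_lt; split=> [FAB | [FA FB] i].
  have := FAB (Ordinal a_lt); have := FAB (Ordinal b_lt).
  by rewrite /sets_at2 /= !eqxx; case: eqP => // ba; case: ab.
by rewrite /sets_at2; case: eqP => [->//|_]; case: eqP => [->//|_].
Qed.

Lemma prod_sets_at2 {n a b A B} {mu : set T -> \bar R} :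
  a <> b -> (a < n)%N -> (b < n)%N -> mu setT = 1%E ->
  (\prod_(i < n) mu (sets_at2 a b A B i) = mu A * mu B)%E.
Proof.
move=> ab a_lt b_lt muT.
rewrite (bigD1 (Ordinal a_lt)) //= (bigD1 (Ordinal b_lt)) /=; last first.
  by apply/eqP => -[ba]; apply: ab.
rewrite big1 ?mule1.
  by rewrite /sets_at2 eqxx; case: eqP => [ba|_]; [case: ab | rewrite eqxx].
move=> i /andP[ia ib]; rewrite /sets_at2.
case: eqP => [ia_eq|_]; first by move: ia; rewrite -(inj_eq val_inj) /= ia_eq eqxx.
by case: eqP => [ib_eq|_] //; move: ib; rewrite -(inj_eq val_inj) /= ib_eq eqxx.
Qed.

End sets_at2.

Section partially_exchangeable.
Context {d : measure_display} {T : measurableType d} {R : realType}.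
Context {P : probability T R} {X Y : nat -> T -> R} {p1 p2 : T -> giry R R}.
Hypotheses (mX : forall i, measurable_fun setT (X i)).
Hypotheses (mY : forall j, measurable_fun setT (Y j)).
Hypotheses (mp1 : measurable_fun setT p1) (mp2 : measurable_fun setT p2).
Hypotheses (p1T : forall w, p1 w setT = 1%E) (p2T : forall w, p2 w setT = 1%E).
Hypothesis cond_iid : forall (n m : nat) (A : 'I_n -> set R) (B : 'I_m -> set R)
    (D : set (giry R R * giry R R)),
  (forall i, measurable (A i)) -> (forall j, measurable (B j)) -> measurable D ->
  P [set w | D (p1 w, p2 w) /\ (forall i : 'I_n, A i (X i w))
             /\ (forall j : 'I_m, B j (Y j w))]
  = (\int[P]_(w in [set w | D (p1 w, p2 w)])
       ((\prod_(i < n) p1 w (A i)) * (\prod_(j < m) p2 w (B j))))%E.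
Hypothesis p1_p2 : same_law P p1 p2.
Local Open Scope ereal_scope.

Lemma prob_rect {a a' b b' A A' B B'} : a <> a' -> b <> b' ->
    measurable A -> measurable A' -> measurable B -> measurable B' ->
  P (X a @^-1` A `&` X a' @^-1` A' `&` (Y b @^-1` B `&` Y b' @^-1` B')) =
  \int[P]_w (p1 w A * p1 w A' * (p2 w B * p2 w B')).
Proof.
move=> aa' bb' mA mA' mB mB'.
have a_lt : (a < (maxn a a').+1)%N by rewrite ltnS leq_maxl.
have a'_lt : (a' < (maxn a a').+1)%N by rewrite ltnS leq_maxr.
have b_lt : (b < (maxn b b').+1)%N by rewrite ltnS leq_maxl.
have b'_lt : (b' < (maxn b b').+1)%N by rewrite ltnS leq_maxr.
have := cond_iid _ _ (fun i : 'I_(maxn a a').+1 => sets_at2 a a' A A' i)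
  (fun j : 'I_(maxn b b').+1 => sets_at2 b b' B B' j) setT
  (fun i => measurable_sets_at2 i mA mA') (fun j => measurable_sets_at2 j mB mB')
  measurableT.
have -> : [set w | @setT (giry R R * giry R R) (p1 w, p2 w)] = setT by apply/seteqP.
rewrite (_ : [set w | _] =
  X a @^-1` A `&` X a' @^-1` A' `&` (Y b @^-1` B `&` Y b' @^-1` B')).
  move=> ->; apply: eq_integral => w _.
  by rewrite (prod_sets_at2 aa' a_lt a'_lt (p1T w)) (prod_sets_at2 bb' b_lt b'_lt (p2T w)).
apply/seteqP; split => w /=.
  move=> [_ [/(sets_at2P (fun k => X k w) aa' a_lt a'_lt) XAA']].
  by move=> /(sets_at2P (fun k => Y k w) bb' b_lt b'_lt) YBB'.
move=> [XAA' YBB']; split=> //; split.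
  exact/(sets_at2P (fun k => X k w) aa' a_lt a'_lt).
exact/(sets_at2P (fun k => Y k w) bb' b_lt b'_lt).
Qed.

Lemma prob_XX {a b A B} : a <> b -> measurable A -> measurable B ->
  P (X a @^-1` A `&` X b @^-1` B) = \int[P]_w (p1 w A * p1 w B).
Proof.
move=> ab mA mB.
have := prob_rect (b := 0) (b' := 1) ab (@n_Sn 0) mA mB measurableT measurableT.
by rewrite !preimage_setT setIT setIT; under eq_integral do rewrite p2T !mule1.
Qed.

Lemma prob_YY {a b A B} : a <> b -> measurable A -> measurable B ->
  P (Y a @^-1` A `&` Y b @^-1` B) = \int[P]_w (p2 w A * p2 w B).
Proof.
move=> ab mA mB.
have := prob_rect (a := 0) (a' := 1) (@n_Sn 0) ab measurableT measurableT mA mB.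
by rewrite !preimage_setT setIT setTI; under eq_integral do rewrite p1T !mul1e.
Qed.

Lemma prob_XY {a b A B} : measurable A -> measurable B ->
  P (X a @^-1` A `&` Y b @^-1` B) = \int[P]_w (p1 w A * p2 w B).
Proof.
move=> mA mB; have := prob_rect (n_Sn a) (n_Sn b) mA measurableT mB measurableT.
by rewrite !preimage_setT !setIT; under eq_integral do rewrite p1T p2T !mule1.
Qed.

Lemma integral_p2_p1 (f : giry R R -> \bar R) : measurable_fun setT f ->
  \int[P]_w f (p2 w) = \int[P]_w f (p1 w).
Proof. exact: (same_law_integral P f mp2 mp1 (same_law_sym P p1_p2)). Qed.

Lemma prob_X a A : measurable A -> P (X a @^-1` A) = \int[P]_w p1 w A.
Proof.
move=> mA; have := prob_XX (n_Sn a) mA measurableT.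
by rewrite preimage_setT setIT; under eq_integral do rewrite p1T mule1.
Qed.

Lemma prob_Y b A : measurable A -> P (Y b @^-1` A) = \int[P]_w p1 w A.
Proof.
move=> mA; have := prob_YY (n_Sn b) mA measurableT.
rewrite preimage_setT setIT; under eq_integral do rewrite p2T mule1.
move=> ->; apply: (integral_p2_p1 (fun mu : giry R R => mu A)).
exact: measurable_giry_ev.
Qed.

Lemma law_X a : same_law P (X a) (X 0).
Proof. by move=> A mA; rewrite !prob_X. Qed.

Lemma law_Y b : same_law P (Y b) (X 0).
Proof. by move=> A mA; rewrite prob_Y ?prob_X. Qed.

Lemma law2_XX {a a'} : a <> a' -> same_law2 P (X a) (X a') (X 0) (X 1).
Proof. by move=> aa' A A' mA mA'; rewrite !prob_XX. Qed.

Lemma law2_YY {b b'} : b <> b' -> same_law2 P (Y b) (Y b') (X 0) (X 1).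
Proof.
move=> bb' B B' mB mB'; rewrite prob_YY ?prob_XX //.
apply: (integral_p2_p1 (fun mu : giry R R => mu B * mu B')).
by apply: emeasurable_funM; exact: measurable_giry_ev.
Qed.

Lemma law2_XY a b : same_law2 P (X a) (Y b) (X 0) (Y 0).
Proof. by move=> A B mA mB; rewrite !prob_XY. Qed.

Local Close Scope ereal_scope.

Hypothesis X0_L2 : X 0 \in Lfun P 2%:E.

Lemma Lfun2_X a : X a \in Lfun P 2%:E.
Proof. exact: (same_law_Lfun2 P (mX 0) (mX a) (same_law_sym P (law_X a)) X0_L2). Qed.

Lemma Lfun2_Y b : Y b \in Lfun P 2%:E.
Proof. exact: (same_law_Lfun2 P (mX 0) (mY b) (same_law_sym P (law_Y b)) X0_L2). Qed.

Lemma covr_X a : covr P (X a) (X a) = covr P (X 0) (X 0).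
Proof.
by congr fine; apply: (same_law2_covariance P (mX a) (mX a) (mX 0) (mX 0));
  exact/same_law2_diag/law_X.
Qed.

Lemma covr_Y b : covr P (Y b) (Y b) = covr P (X 0) (X 0).
Proof.
by congr fine; apply: (same_law2_covariance P (mY b) (mY b) (mX 0) (mX 0));
  exact/same_law2_diag/law_Y.
Qed.

Lemma covr_XX a a' : a <> a' -> covr P (X a) (X a') = covr P (X 0) (X 1).
Proof.
move=> aa'; congr fine.
exact: (same_law2_covariance P (mX a) (mX a') (mX 0) (mX 1) (law2_XX aa')).
Qed.

Lemma covr_YY b b' : b <> b' -> covr P (Y b) (Y b') = covr P (X 0) (X 1).
Proof.
move=> bb'; congr fine.
exact: (same_law2_covariance P (mY b) (mY b') (mX 0) (mX 1) (law2_YY bb')).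
Qed.

Lemma covr_XY a b : covr P (X a) (Y b) = covr P (X 0) (Y 0).
Proof.
congr fine.
exact: (same_law2_covariance P (mX a) (mY b) (mX 0) (mY 0) (law2_XY a b)).
Qed.

Lemma covr_XY_bounds {i i'} j : i <> i' ->
  - covr P (X i) (X i') <= covr P (X i) (Y j) <= covr P (X i) (X i').
Proof.
move=> ii'; rewrite covr_XX // covr_XY.
have negY_L2 b : \- Y b \in Lfun P 2%:E by exact: Lfun2N (Lfun2_Y b).
have covr_negY b : covr P (\- Y b) (\- Y b) = covr P (X 0) (X 0).
  by rewrite covrNl ?covrNr ?opprK ?covr_Y ?Lfun2_Y.
have covr_negYY b b' : b <> b' -> covr P (\- Y b) (\- Y b') = covr P (X 0) (X 1).
  by move=> bb'; rewrite covrNl ?covrNr ?opprK ?covr_YY ?Lfun2_Y.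
have covr_XnegY a b : covr P (X a) (\- Y b) = - covr P (X 0) (Y 0).
  by rewrite covrNr ?covr_XY ?Lfun2_X ?Lfun2_Y.
have := exchangeable_pair_covr_ge0 P Lfun2_X Lfun2_Y covr_X covr_Y covr_XX covr_YY covr_XY.
have := exchangeable_pair_covr_ge0 P Lfun2_X negY_L2
  covr_X covr_negY covr_XX covr_negYY covr_XnegY.
move=> ? ?; apply/andP; split; lra.
Qed.

End partially_exchangeable.

Theorem proposition1 (d : measure_display) (T : measurableType d) (R : realType)
  (P : probability T R) (X Y : nat -> T -> R) (p1 p2 : T -> giry R R) :
  (forall i, measurable_fun setT (X i)) ->
  (forall j, measurable_fun setT (Y j)) ->
  measurable_fun setT p1 -> measurable_fun setT p2 ->
  (forall w, p1 w setT = 1%E) -> (forall w, p2 w setT = 1%E) ->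
  (forall (n m : nat) (A : 'I_n -> set R) (B : 'I_m -> set R)
          (D : set (giry R R * giry R R)),
     (forall i, measurable (A i)) -> (forall j, measurable (B j)) ->
     measurable D ->
     P [set w | D (p1 w, p2 w) /\ (forall i : 'I_n, A i (X i w))
                /\ (forall j : 'I_m, B j (Y j w))]
     = (\int[P]_(w in [set w | D (p1 w, p2 w)])
          ((\prod_(i < n) p1 w (A i)) * (\prod_(j < m) p2 w (B j))))%E) ->
  (forall U : set (giry R R), measurable U -> P (p1 @^-1` U) = P (p2 @^-1` U)) ->
  X 0%N \in Lfun P 2%:E -> (0 < variance P (X 0%N))%E ->
  forall i i' j : nat, i <> i' ->
    - corr P (X i) (X i') <= corr P (X i) (Y j) <= corr P (X i) (X i').
Proof.
move=> mX mY mp1 mp2 p1T p2T cond_iid p1_p2 X0_L2 X0_var_gt0 i i' j ii'.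
pose s := covr P (X 0) (X 0).
have s_gt0 : 0 < s by apply: fine_gt0; rewrite X0_var_gt0 ltey_eq variance_fin_num.
have var_X a : covr P (X a) (X a) = s := covr_X mX p1T p2T cond_iid a.
have var_Y b : covr P (Y b) (Y b) = s := covr_Y mX mY mp1 mp2 p1T p2T cond_iid p1_p2 b.
have /andP[lo hi] := covr_XY_bounds mX mY mp1 mp2 p1T p2T cond_iid p1_p2 X0_L2 j ii'.
rewrite !(corr_equal_variance P s_gt0) // -mulNr.
by apply/andP; split; apply: ler_wpM2r; rewrite ?invr_ge0 ?(ltW s_gt0).
Qed.
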